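(* Let $(\Sigma(t),\beta(t))$ be a solution of Hamilton's equations $\frac{d}{dt}(\Sigma,\beta_\Sigma)=X_h(\Sigma,\beta_\Sigma)$ starting at a point of $\mathcal{R}_{1,0}$, and let $\Gamma(t)$ be the closed plane curve whose rotation about the vertical axis gives $\Sigma(t)$. Let $f(t,\rho)=(\xi(t,\rho),\eta(t,\rho))$ be the parametrization of $\Gamma(t)$ moving normally, $f_t=k_g\,n_\Gamma\circ f$ with $n_\Gamma$ the unit normal of $\Gamma$. Then $$\xi_t=\frac{\xi_\rho\eta_\rho}{\xi(\xi_\rho^2+\eta_\rho^2)},\qquad \eta_t=-\frac{\xi_\rho^2}{\xi(\xi_\rho^2+\eta_\rho^2)},$$ and the vorticity density $\beta(t)=\zeta_\rho d\rho$ evolves by $$\zeta_t=-\frac{\eta_\rho\zeta_\rho}{\xi(\xi_\rho^2+\eta_\rho^2)}.$$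
   Context: Setting: $\mu$ Euclidean volume form on $\mathbb{R}^3$, $d\nu=\mu$, $a>0$; $S$ compact oriented surface with closed nowhere-vanishing 1-form $\beta$ with period group $\ell\mathbb{Z}$; $\mathrm{Gr}_a^{S,\beta}$ the set of pairs $(\Sigma,\beta_\Sigma)$ ($\Sigma\subset\mathbb{R}^3$ oriented embedded surface, $\int_\Sigma\nu=a$, orientation-preserving $\Psi:S\to\Sigma$ with $\Psi^*\beta_\Sigma=\beta$). Vortex lines are fibers of $b_\Sigma:\Sigma\to\mathbb{R}/\ell\mathbb{Z}$ with $\beta_\Sigma=b_\Sigma^*\vartheta_\ell$. Darboux frame $\{T,n_g,n\}$ of vortex lines: $n$ unit normal of $\Sigma$ compatible with orientations, $T$ unit tangent, $n_g=n\times T$, oriented so $\beta_\Sigma(n_g)>0$; $kN=k_gn_g+k_nn$ is the curvature vector of a vortex line. Tangent vectors at $(\Sigma,\beta_\Sigma)$ are pairs (normal velocity $\rho\in C^\infty(\Sigma)$ with $\int\rho\,\mu_\Sigma=0$, $\mu_\Sigma=i_n\mu$; exact variation $d\lambda$ of $\beta_\Sigma$), and the Hamiltonian vector field of $h=\int_{\mathbb{T}_\ell}\mathrm{length}(C_z)\vartheta_\ell$ is $X_h=(k_g,-d(k_n\beta_\Sigma(n_g)))$. $\mathcal{R}_{1,0}$ consists of the $(\Sigma,\beta_\Sigma)$ where $\Sigma$ is the surface of revolution $(\xi(\rho)\cos\theta,\xi(\rho)\sin\theta,\eta(\rho))$, $\xi>0$, $\rho,\theta\in\mathbb{R}/2\pi\mathbb{Z}$,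 obtained by rotating the closed plane curve $\Gamma=(\xi,\eta)$ about the vertical axis, oriented so that $n=(\xi_\rho^2+\eta_\rho^2)^{-1/2}(-\eta_\rho\cos\theta,-\eta_\rho\sin\theta,\xi_\rho)$, and $\beta_\Sigma=\zeta_\rho d\rho$ with $\zeta_\rho>0$ and $\zeta(\rho+2\pi)=\zeta(\rho)+\ell$ (vortex lines are the parallel circles). Then $k_g=-\xi_\rho/(\xi\sqrt{\xi_\rho^2+\eta_\rho^2})$, $k_n=\eta_\rho/(\xi\sqrt{\xi_\rho^2+\eta_\rho^2})$. *)

From Stdlib Require Import Reals ZArith.
From Coquelicot Require Import Coquelicot.
Open Scope R_scope.

Definition dt (F : R -> R -> R) (t r : R) : R := Derive (fun s => F s r) t.
Definition drho (F : R -> R -> R) (t r : R) : R := Derive (fun s => F t s) r.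

Fixpoint Ck (k : nat) (F : R -> R -> R) : Prop :=
  match k with
  | O => forall p : R * R, continuous (fun q : R * R => F (fst q) (snd q)) p
  | S k' =>
      (forall t r, ex_derive (fun s => F s r) t /\ ex_derive (fun s => F t s) r)
      /\ Ck k' F /\ Ck k' (dt F) /\ Ck k' (drho F)
  end.

Definition smooth2 (F : R -> R -> R) : Prop := forall k, Ck k F.

Definition speed (xi eta : R -> R -> R) (t r : R) : R :=
  sqrt (drho xi t r ^ 2 + drho eta t r ^ 2).

(** Unit normal n_Gamma of Gamma, compatible with the normal
    n = |f_rho|^{-1} (-eta_rho cos th, -eta_rho sin th, xi_rho) of Sigma. *)
Definition nGamma (xi eta : R -> R -> R) (t r : R) : R * R :=
  (- drho eta t r / speed xi eta t r, drho xi t r / speed xi eta t r).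

(** Geodesic and normal curvature of the vortex lines (parallel circles). *)
Definition kg (xi eta : R -> R -> R) (t r : R) : R :=
  - drho xi t r / (xi t r * speed xi eta t r).
Definition kn (xi eta : R -> R -> R) (t r : R) : R :=
  drho eta t r / (xi t r * speed xi eta t r).

(** beta_Sigma(n_g) for beta_Sigma = zeta_rho d rho: n_g is the unit vector
    d_rho F / |d_rho F| (tangent to meridians, orthogonal to the parallels,
    oriented so that beta(n_g) > 0), and |d_rho F| = |f_rho|. *)
Definition beta_ng (xi eta zeta : R -> R -> R) (t r : R) : R :=
  drho zeta t r / speed xi eta t r.

(** Since [k_g n_Gamma = (xi_rho eta_rho, - xi_rho^2) / (xi |f_rho|^2)], the
    velocity formulas are pure algebra.  For the vorticity, commuting the
    partial derivatives turns the second Hamilton equation into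
    [d_rho (zeta_t + k_n beta(n_g)) = 0], and
    [k_n beta(n_g) = eta_rho zeta_rho / (xi |f_rho|^2)].  Hence
    [zeta_t + k_n beta(n_g)] depends on [t] only; as [beta] only determines
    [zeta] up to a function of [t], subtracting a primitive of that function
    normalizes [zeta] so that the stated evolution law holds exactly. *)

From Stdlib Require Import Reals ZArith Lra.
From Coquelicot Require Import Coquelicot.
Open Scope R_scope.

Lemma div_mul_sqrt_div (x S c d : R) : x <> 0 -> 0 < S ->
  c / (x * sqrt S) * (d / sqrt S) = c * d / (x * S).
Proof.
  intros Hx HS.
  assert (Hsq : sqrt S * sqrt S = S) by (apply sqrt_sqrt; lra).
  assert (Hpos : 0 < sqrt S) by (apply sqrt_lt_R0; exact HS).
  replace (x * S) with (x * (sqrt S * sqrt S)) by (rewrite Hsq; reflexivity).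
  field; lra.
Qed.

Definition vorticity_flux (xi eta zeta : R -> R -> R) (t r : R) : R :=
  drho eta t r * drho zeta t r / (xi t r * (drho xi t r ^ 2 + drho eta t r ^ 2)).

Section Curvatures.

Variables (xi eta zeta : R -> R -> R) (t r : R).
Hypothesis xi_pos : 0 < xi t r.
Hypothesis regular : 0 < drho xi t r ^ 2 + drho eta t r ^ 2.

Lemma kg_nGamma_fst : kg xi eta t r * fst (nGamma xi eta t r) =
  drho xi t r * drho eta t r / (xi t r * (drho xi t r ^ 2 + drho eta t r ^ 2)).
Proof.
  unfold kg, nGamma, speed; cbn [fst].
  rewrite div_mul_sqrt_div by lra.
  unfold Rdiv; ring.
Qed.

Lemma kg_nGamma_snd : kg xi eta t r * snd (nGamma xi eta t r) =
  - (drho xi t r ^ 2) / (xi t r * (drho xi t r ^ 2 + drho eta t r ^ 2)).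
Proof.
  unfold kg, nGamma, speed; cbn [snd].
  rewrite div_mul_sqrt_div by lra.
  unfold Rdiv; ring.
Qed.

Lemma kn_beta_ng_eq : kn xi eta t r * beta_ng xi eta zeta t r =
  vorticity_flux xi eta zeta t r.
Proof. unfold kn, beta_ng, speed; apply div_mul_sqrt_div; lra. Qed.

End Curvatures.

Lemma smooth2_dt (F : R -> R -> R) : smooth2 F -> smooth2 (dt F).
Proof. intros HF k; destruct (HF (S k)) as (_ & _ & H & _); exact H. Qed.

Lemma smooth2_drho (F : R -> R -> R) : smooth2 F -> smooth2 (drho F).
Proof. intros HF k; destruct (HF (S k)) as (_ & _ & _ & H); exact H. Qed.

Lemma smooth2_ex_derive_t (F : R -> R -> R) (t r : R) :
  smooth2 F -> ex_derive (fun s => F s r) t.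
Proof. intros HF; destruct (HF 1%nat) as [H _]; exact (proj1 (H t r)). Qed.

Lemma smooth2_ex_derive_rho (F : R -> R -> R) (t r : R) :
  smooth2 F -> ex_derive (fun s => F t s) r.
Proof. intros HF; destruct (HF 1%nat) as [H _]; exact (proj2 (H t r)). Qed.

Lemma smooth2_continuity_2d_pt (F : R -> R -> R) (t r : R) :
  smooth2 F -> continuity_2d_pt F t r.
Proof. intros HF; apply continuity_2d_pt_filterlim, (HF 0%nat (t, r)). Qed.

Lemma smooth2_dt_drho (F : R -> R -> R) (t r : R) :
  smooth2 F -> dt (drho F) t r = drho (dt F) t r.
Proof.
  intros HF; apply Schwarz.
  - apply locally_2d_forall; intros u v.
    repeat split.
    + exact (smooth2_ex_derive_t F u v HF).
    + exact (smooth2_ex_derive_rho F u v HF).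
    + exact (smooth2_ex_derive_t (drho F) u v (smooth2_drho F HF)).
    + exact (smooth2_ex_derive_rho (dt F) u v (smooth2_dt F HF)).
  - exact (smooth2_continuity_2d_pt _ t r (smooth2_dt _ (smooth2_drho F HF))).
  - exact (smooth2_continuity_2d_pt _ t r (smooth2_drho _ (smooth2_dt F HF))).
Qed.

Lemma ex_derive_mul_div_sqr_add (a b c e : R -> R) (x : R) :
  ex_derive a x -> ex_derive b x -> ex_derive c x -> ex_derive e x ->
  c x <> 0 -> 0 < a x ^ 2 + b x ^ 2 ->
  ex_derive (fun q => b q * e q / (c q * (a q ^ 2 + b q ^ 2))) x.
Proof.
  intros Ha Hb Hc He Hcx HS.
  apply (ex_derive_div (fun q => b q * e q) (fun q => c q * (a q ^ 2 + b q ^ 2))).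
  - now apply ex_derive_mult.
  - apply ex_derive_mult; [exact Hc |].
    apply (ex_derive_plus (fun q => a q ^ 2) (fun q => b q ^ 2));
      now apply ex_derive_pow.
  - apply Rmult_integral_contrapositive; split; lra.
Qed.

Lemma is_derive_0_const (f : R -> R) (a b : R) :
  (forall x, is_derive f x 0) -> f a = f b.
Proof.
  intros Hf; destruct (Rtotal_order a b) as [Hab | [-> | Hab]].
  - now apply eq_is_derive.
  - reflexivity.
  - symmetry; now apply eq_is_derive.
Qed.

Lemma is_derive_RInt_0 (g : R -> R) (t : R) :
  (forall s, continuous g s) -> is_derive (RInt g 0) t (g t).
Proof.
  intros Hg; apply (is_derive_RInt g (RInt g 0) 0 t); [| apply Hg].
  apply filter_forall; intros b.
  apply (@RInt_correct R_CompleteNormedModule),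
        (@ex_RInt_continuous R_CompleteNormedModule).
  intros; apply Hg.
Qed.

Lemma normalize_dt (zeta h : R -> R -> R) :
  (forall t r, ex_derive (fun s => zeta s r) t /\ ex_derive (fun s => zeta t s) r) ->
  (forall t, continuous (fun s => h s 0) t) ->
  (forall t r, dt zeta t r + h t r = dt zeta t 0 + h t 0) ->
  exists zeta' : R -> R -> R, forall t r,
    ex_derive (fun s => zeta' s r) t /\ ex_derive (fun s => zeta' t s) r /\
    drho zeta' t r = drho zeta t r /\ dt zeta' t r = - h t r.
Proof.
  intros Hzeta Hh Hconst.
  set (g := fun s => - h s 0).
  assert (Hg : forall s, continuous g s).
  { intros s; apply (continuous_opp (fun s => h s 0)), Hh. }
  exists (fun s q => zeta s q - zeta s 0 + RInt g 0 s); intros t r.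
  assert (DT : is_derive (fun s => zeta s r - zeta s 0 + RInt g 0 s) t
                 (dt zeta t r - dt zeta t 0 + g t)).
  { apply (is_derive_plus (fun s => zeta s r - zeta s 0) (RInt g 0)).
    - apply (is_derive_minus (fun s => zeta s r) (fun s => zeta s 0));
        apply Derive_correct; [exact (proj1 (Hzeta t r)) | exact (proj1 (Hzeta t 0))].
    - now apply is_derive_RInt_0. }
  assert (DR : is_derive (fun q => zeta t q - zeta t 0 + RInt g 0 t) r
                 (drho zeta t r)).
  { replace (drho zeta t r) with (drho zeta t r - 0 + 0) by ring.
    apply (is_derive_plus (fun q => zeta t q - zeta t 0) (fun _ => RInt g 0 t)).
    - apply (is_derive_minus (fun q => zeta t q) (fun _ => zeta t 0)).
      + apply Derive_correct; exact (proj2 (Hzeta t r)).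
      + apply (@is_derive_const R_AbsRing R_NormedModule).
    - apply (@is_derive_const R_AbsRing R_NormedModule). }
  repeat split.
  - eexists; exact DT.
  - eexists; exact DR.
  - now apply is_derive_unique.
  - unfold dt at 1; cbv beta.
    replace (Derive (fun s => zeta s r - zeta s 0 + RInt g 0 s) t)
      with (dt zeta t r - dt zeta t 0 + g t) by (symmetry; now apply is_derive_unique).
    unfold g; specialize (Hconst t r); lra.
Qed.

Section VorticityFlux.

Variables xi eta zeta : R -> R -> R.
Hypotheses (xi_smooth : smooth2 xi) (eta_smooth : smooth2 eta)
           (zeta_smooth : smooth2 zeta).
Hypothesis xi_pos : forall t r, 0 < xi t r.
Hypothesis regular : forall t r, 0 < drho xi t r ^ 2 + drho eta t r ^ 2.

Lemma vorticity_flux_ex_derive_t (t r : R) :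
  ex_derive (fun s => vorticity_flux xi eta zeta s r) t.
Proof.
  apply (ex_derive_mul_div_sqr_add (fun s => drho xi s r) (fun s => drho eta s r)
           (fun s => xi s r) (fun s => drho zeta s r)).
  - exact (smooth2_ex_derive_t _ t r (smooth2_drho xi xi_smooth)).
  - exact (smooth2_ex_derive_t _ t r (smooth2_drho eta eta_smooth)).
  - exact (smooth2_ex_derive_t xi t r xi_smooth).
  - exact (smooth2_ex_derive_t _ t r (smooth2_drho zeta zeta_smooth)).
  - apply Rgt_not_eq, xi_pos.
  - apply regular.
Qed.

Lemma vorticity_flux_ex_derive_rho (t r : R) :
  ex_derive (fun q => vorticity_flux xi eta zeta t q) r.
Proof.
  apply (ex_derive_mul_div_sqr_add (fun q => drho xi t q) (fun q => drho eta t q)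
           (fun q => xi t q) (fun q => drho zeta t q)).
  - exact (smooth2_ex_derive_rho _ t r (smooth2_drho xi xi_smooth)).
  - exact (smooth2_ex_derive_rho _ t r (smooth2_drho eta eta_smooth)).
  - exact (smooth2_ex_derive_rho xi t r xi_smooth).
  - exact (smooth2_ex_derive_rho _ t r (smooth2_drho zeta zeta_smooth)).
  - apply Rgt_not_eq, xi_pos.
  - apply regular.
Qed.

Hypothesis hamilton_beta : forall t r, dt (drho zeta) t r =
  - drho (fun s q => kn xi eta s q * beta_ng xi eta zeta s q) t r.

Lemma dt_zeta_add_vorticity_flux_const (t r : R) :
  dt zeta t r + vorticity_flux xi eta zeta t r =
  dt zeta t 0 + vorticity_flux xi eta zeta t 0.
Proof.
  apply (is_derive_0_const (fun q => dt zeta t q + vorticity_flux xi eta zeta t q)).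
  intros x.
  replace 0 with (drho (dt zeta) t x + drho (vorticity_flux xi eta zeta) t x).
  - apply (is_derive_plus (fun q => dt zeta t q)
             (fun q => vorticity_flux xi eta zeta t q)); apply Derive_correct.
    + exact (smooth2_ex_derive_rho _ t x (smooth2_dt zeta zeta_smooth)).
    + apply vorticity_flux_ex_derive_rho.
  - rewrite <- smooth2_dt_drho, hamilton_beta by exact zeta_smooth.
    unfold drho.
    rewrite (Derive_ext (fun q => vorticity_flux xi eta zeta t q)
               (fun q => kn xi eta t q * beta_ng xi eta zeta t q)); [ring |].
    intros q; symmetry; apply kn_beta_ng_eq; auto.
Qed.

End VorticityFlux.

Theorem theorem3p10 (l : R) (xi eta zeta : R -> R -> R) :
  0 < l ->
  smooth2 xi -> smooth2 eta -> smooth2 zeta ->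
  (* Sigma(t) is the surface of revolution of the closed embedded regular
     plane curve Gamma(t) = (xi(t,.), eta(t,.)), xi > 0 *)
  (forall t r, 0 < xi t r) ->
  (forall t r, xi t (r + 2 * PI) = xi t r /\ eta t (r + 2 * PI) = eta t r) ->
  (forall t r1 r2, xi t r1 = xi t r2 -> eta t r1 = eta t r2 ->
      exists k : Z, r2 = r1 + 2 * PI * IZR k) ->
  (forall t r, 0 < drho xi t r ^ 2 + drho eta t r ^ 2) ->
  (* beta(t) = zeta_rho d rho, vortex lines are the parallels, period l *)
  (forall t r, 0 < drho zeta t r) ->
  (forall t r, zeta t (r + 2 * PI) = zeta t r + l) ->
  (* Hamilton's equations, first component: f moves normally with normal
     velocity k_g, i.e. f_t = k_g n_Gamma o f *)
  (forall t r, dt xi t r = kg xi eta t r * fst (nGamma xi eta t r) /\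
               dt eta t r = kg xi eta t r * snd (nGamma xi eta t r)) ->
  (* Hamilton's equations, second component: d/dt beta = - d(k_n beta(n_g)),
     beta pulled back along the normal parametrization *)
  (forall t r, dt (drho zeta) t r =
               - drho (fun s q => kn xi eta s q * beta_ng xi eta zeta s q) t r) ->
  (forall t r,
      dt xi t r = drho xi t r * drho eta t r /
                  (xi t r * (drho xi t r ^ 2 + drho eta t r ^ 2)) /\
      dt eta t r = - (drho xi t r ^ 2) /
                  (xi t r * (drho xi t r ^ 2 + drho eta t r ^ 2)))
  /\
  (* zeta is determined by beta only up to a function of t; with a suitable
     normalization it evolves by the stated law *)
  (exists zeta' : R -> R -> R,
      forall t r,
        ex_derive (fun s => zeta' s r) t /\ ex_derive (fun s => zeta' t s) r /\
        drho zeta' t r = drho zeta t r /\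
        dt zeta' t r = - (drho eta t r * drho zeta t r) /
                       (xi t r * (drho xi t r ^ 2 + drho eta t r ^ 2))).
Proof.
  intros _ Sxi Seta Szeta Hxi _ _ Hreg _ _ Hmove Hbeta.
  split.
  - intros t r; destruct (Hmove t r) as [-> ->].
    split; [apply kg_nGamma_fst | apply kg_nGamma_snd]; auto.
  - destruct (normalize_dt zeta (vorticity_flux xi eta zeta)) as [zeta' Hzeta'].
    + intros t r; split;
        [exact (smooth2_ex_derive_t zeta t r Szeta)
        | exact (smooth2_ex_derive_rho zeta t r Szeta)].
    + intros t; apply (@ex_derive_continuous R_AbsRing R_NormedModule).
      now apply vorticity_flux_ex_derive_t.
    + intros t r; apply dt_zeta_add_vorticity_flux_const; auto.
    + exists zeta'; intros t r.
      destruct (Hzeta' t r) as (? & ? & ? & ->).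
      repeat split; auto.
      unfold vorticity_flux, Rdiv; ring.
Qed.
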